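(* Let $\Phi=(A;\{E_i\}_{i=0}^d;A^*;\{E^*_i\}_{i=0}^d)$ be a tridiagonal system on $V$ with $d\ge1$, such that $(A,A^* )$ satisfies the $q$-Serre relations, with $E_iV$ the eigenspace of $A$ for $\theta_i=q^{2i-d}$ and $E^*_iV$ the eigenspace of $A^*$ for $\theta^*_i=q^{d-2i}$. Let $\{U_i\}_{i=0}^d$ be its split decomposition and $K:V\to V$ the linear map acting on $U_i$ as $q^{d-2i}I$. Then $$\frac{qKA-q^{-1}AK}{q-q^{-1}}=I,\qquad \frac{qK^{-1}A^*-q^{-1}A^*K^{-1}}{q-q^{-1}}=I.$$
   Context: $\mathcal K$ is an algebraically closed field; $V$ is a nonzero finite-dimensional vector space over $\mathcal K$; $q\in\mathcal K$ is nonzero and not a root of unity; $[3]_q=q^2+1+q^{-2}$. The $q$-Serre relations for $(X,Y)$: $X^3Y-[3]_qX^2YX+[3]_qXYX^2-YX^3=0$ and $Y^3X-[3]_qY^2XY+[3]_qYXY^2-XY^3=0$. Primitive idempotent of a diagonalizable $X$ for eigenvalue $\lambda_i$: $\prod_{j\ne i}\frac{X-\lambda_jI}{\lambda_i-\lambda_j}$. A tridiagonal system on $V$ is a sequence $(A;\{E_i\}_{i=0}^d;A^*;\{E^*_i\}_{i=0}^d)$ with $A,A^*$ diagonalizable, $\{E_i\}$, $\{E^*_i\}$ orderings of their primitive idempotents, $E_iA^*E_j=0$ and $E^*_iAE^*_j=0$ when $|i-j|>1$, and no subspaces other than $0,V$ invariant under both $A$ and $A^*$. Split decomposition: $U_i=(E^*_0V+\cdots+E^*_iV)\cap(E_iV+\cdots+E_dV)$;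 known: $V=U_0\oplus\cdots\oplus U_d$, $(A-\theta_iI)U_i\subseteq U_{i+1}$, $(A^*-\theta^*_iI)U_i\subseteq U_{i-1}$ ($U_{-1}=U_{d+1}=0$). *)

From HB Require Import structures.
From mathcomp Require Import all_boot all_order all_algebra.
Set Implicit Arguments. Unset Strict Implicit. Unset Printing Implicit Defensive.
Import Order.TTheory GRing.Theory Num.Theory.
Local Open Scope ring_scope.

(* CONVENTION: V = 'rV[F]_n.+1 (a nonzero finite-dim space); a linear map X
   on V is a square matrix acting on the RIGHT of row vectors: v |-> v *m X.
   Hence the ring product X * Y (= X *m Y) of 'M_n.+1 represents the
   composition "first X, then Y", i.e. the paper's  Y X  (= Y o X).
   The image X V of a map X is the row space of X. *)

Definition qint3 (F : fieldType) (q : F) : F := q ^+ 2 + 1 + q ^- 2.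

(* q-Serre relations for (X,Y), transcribed to the row-vector convention:
   the paper's word X1 X2 ... Xk (composition) becomes Xk * ... * X1. *)
Definition qSerre (F : fieldType) (n : nat) (q : F) (X Y : 'M[F]_n.+1) : Prop :=
  Y * X ^+ 3 - qint3 q *: (X * Y * X ^+ 2) + qint3 q *: (X ^+ 2 * Y * X)
    - X ^+ 3 * Y = 0
  /\ X * Y ^+ 3 - qint3 q *: (Y * X * Y ^+ 2) + qint3 q *: (Y ^+ 2 * X * Y)
    - Y ^+ 3 * X = 0.

Definition prim_idem (F : fieldType) (n d : nat) (th : 'I_d.+1 -> F)
  (X : 'M[F]_n.+1) (i : 'I_d.+1) : 'M[F]_n.+1 :=
  \prod_(j < d.+1 | j != i) ((th i - th j)^-1 *: (X - (th j)%:M)).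

Definition idem_ordering (F : fieldType) (n d : nat) (X : 'M[F]_n.+1)
  (E : 'I_d.+1 -> 'M[F]_n.+1) : Prop :=
  exists th : 'I_d.+1 -> F,
    [/\ injective th,
        (forall a, eigenvalue X a <-> exists i, a = th i)
      & forall i, E i = prim_idem th X i].

Definition tridiagonal_system (F : fieldType) (n d : nat)
  (A : 'M[F]_n.+1) (E : 'I_d.+1 -> 'M[F]_n.+1)
  (As : 'M[F]_n.+1) (Es : 'I_d.+1 -> 'M[F]_n.+1) : Prop :=
  [/\ diagonalizable A, diagonalizable As,
      idem_ordering A E & idem_ordering As Es]
  /\ (forall i j : 'I_d.+1, (j.+1 < i)%N \/ (i.+1 < j)%N ->
          E i * As * E j = 0 /\ Es i * A * Es j = 0)
  /\ (forall W : 'M[F]_n.+1, stablemx W A -> stablemx W As ->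
          (W == (0 : 'M[F]_n.+1))%MS || row_full W).

Definition split_space (F : fieldType) (n d : nat)
  (E Es : 'I_d.+1 -> 'M[F]_n.+1) (i : 'I_d.+1) : 'M[F]_n.+1 :=
  ((\sum_(j < d.+1 | (j <= i)%N) Es j) :&: (\sum_(j < d.+1 | (i <= j)%N) E j))%MS.

(* The split decomposition satisfies (A - th_i) U_i <= U_(i+1) and
   (A* - th*_i) U_i <= U_(i-1), so the sum of the U_i is invariant under A and
   A*; it contains E_d V <> 0, hence it is all of V by irreducibility.  On U_i
   write A = th_i + R with R U_i <= U_(i+1).  As K is q^(d-2i) on U_i and
   q^(d-2i-2) on U_(i+1), the R-terms of q K A - q^-1 A K cancel and what is
   left is (q - q^-1) on U_i; the identity for A* and K^-1 is the same
   computation with the lowering map. *)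

From HB Require Import structures.
From mathcomp Require Import all_boot all_order all_algebra.
From mathcomp Require Import zify ring.
Import Order.TTheory GRing.Theory Num.Theory.
Local Open Scope ring_scope.
Set Implicit Arguments. Unset Strict Implicit. Unset Printing Implicit Defensive.

Section PrimitiveIdempotents.

Variables (F : fieldType) (d : nat) (th : 'I_d.+1 -> F).
Hypothesis th_inj : injective th.

Definition lagrange_poly (i : 'I_d.+1) : {poly F} :=
  \prod_(j < d.+1 | j != i) ((th i - th j)^-1 *: ('X - (th j)%:P)).

Lemma size_lagrange_poly i : (size (lagrange_poly i) <= d.+1)%N.
Proof.
apply: leq_trans (size_poly_prod_leq _ _) _.
have size_factor j : (size ((th i - th j)^-1 *: ('X - (th j)%:P)) <= 2)%N.
  by apply: leq_trans (size_scale_leq _ _) _; rewrite size_XsubC.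
have := @leq_sum _ (index_enum _) (fun j => j != i) _ (fun=> 2%N)
  (fun j _ => size_factor j).
rewrite sum_nat_const.
have -> : #|(fun j : 'I_d.+1 => j != i)| = d by rewrite cardC1 card_ord.
set s := (\sum_(_ | _) _)%N; lia.
Qed.

Lemma horner_lagrange_poly i k : (lagrange_poly i).[th k] = (i == k)%:R.
Proof.
rewrite horner_prod; have [<-|ik] := eqVneq i k.
  apply: big1 => j ji; rewrite hornerZ hornerXsubC mulVf //.
  by rewrite subr_eq0 (inj_eq th_inj) eq_sym.
by rewrite (bigD1 k) 1?eq_sym //= hornerZ hornerXsubC subrr mulr0 mul0r.
Qed.

Lemma sum_lagrange_poly : \sum_i lagrange_poly i = 1.
Proof.
apply/eqP; rewrite -subr_eq0; apply/eqP.
apply: (@roots_geq_poly_eq0 _ _ [seq th k | k <- enum 'I_d.+1]).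
- apply/allP => _ /mapP [k _ ->]; rewrite /root !hornerE horner_sum.
  rewrite (bigD1 k) //= big1 => [|i ik]; rewrite horner_lagrange_poly.
    by rewrite eqxx addr0 subrr.
  by rewrite (negPf ik).
- by rewrite map_inj_uniq ?enum_uniq.
- rewrite size_map size_enum_ord; apply: leq_trans (size_polyD _ _) _.
  rewrite geq_max size_polyN size_poly1 andbT.
  apply: leq_trans (size_sum _ _ _) _.
  by apply/bigmax_leqP => i _; apply: size_lagrange_poly.
Qed.

Variable n : nat.

Lemma prim_idemE (X : 'M[F]_n.+1) i :
  prim_idem th X i = horner_mx X (lagrange_poly i).
Proof.
rewrite rmorph_prod; apply: eq_bigr => j _.
by rewrite -[RHS]/(horner_mx X _) horner_mxZ rmorphB /= horner_mx_X horner_mx_C.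
Qed.

Lemma sum_prim_idem (X : 'M[F]_n.+1) : \sum_i prim_idem th X i = 1.
Proof.
under eq_bigr do rewrite prim_idemE.
by rewrite -rmorph_sum sum_lagrange_poly rmorph1.
Qed.

Lemma prim_idem_id m (X : 'M[F]_n.+1) i (W : 'M[F]_(m, n.+1)) :
  (W <= eigenspace X (th i))%MS -> W *m prim_idem th X i = W.
Proof.
move/eigenspaceP => WX; apply: (big_ind (fun M => W *m M = W)) => //.
- exact: mulmx1.
- by move=> M1 M2 h1 h2; rewrite -mulmxE mulmxA h1 h2.
move=> j ji; rewrite -scalemxAr mulmxBr WX mul_mx_scalar -scalerBl scalerA.
by rewrite mulVf ?scale1r // subr_eq0 (inj_eq th_inj) eq_sym.
Qed.

End PrimitiveIdempotents.

Section IdempotentOrdering.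

Variables (F : fieldType) (n d : nat) (X : 'M[F]_n.+1) (E : 'I_d.+1 -> 'M[F]_n.+1).
Hypothesis EX : idem_ordering X E.

Lemma idem_ordering_sum : \sum_i E i = 1.
Proof.
have [th [th_inj _ Edef]] := EX.
by under eq_bigr do rewrite Edef; apply: sum_prim_idem.
Qed.

Lemma idem_ordering_neq0 i : E i != 0.
Proof.
have [th [th_inj eigX Edef]] := EX; rewrite Edef.
have /eigenvalueP [v /eigenspaceP vX v0] : eigenvalue X (th i) by apply/eigX; exists i.
by apply: contraNneq v0 => E0; rewrite -(prim_idem_id th_inj vX) E0 mulmx0.
Qed.

End IdempotentOrdering.

Section SubspaceSums.

Variables (F : fieldType) (n : nat) (I : finType).
Implicit Types (T U : I -> 'M[F]_n.+1) (X K : 'M[F]_n.+1).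

Lemma sumsmx_subset (P Q : pred I) T : (forall i, P i -> Q i) ->
  (\sum_(i | P i) T i <= \sum_(i | Q i) T i)%MS.
Proof. by move=> PQ; apply/sumsmx_subP => i /PQ Qi; apply: (sumsmx_sup i). Qed.

Lemma sum1_sumsmx_full T : \sum_i T i = 1 -> row_full (\sum_i T i)%MS.
Proof.
move=> T1; rewrite -sub1mx; have -> : 1%:M = \sum_i T i by rewrite T1.
exact: summx_sub_sums.
Qed.

Lemma sumsmx_eigenspace_shift (P : pred I) T X (th : I -> F) i :
  (forall j, P j -> (T j <= eigenspace X (th j))%MS) ->
  ((\sum_(j | P j) T j)%MS *m (X - (th i)%:M) <= \sum_(j | P j && (j != i)) T j)%MS.
Proof.
move=> eigT; rewrite sumsmxMr; apply/sumsmx_subP => j Pj.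
rewrite mulmxBr (eigenspaceP (eigT j Pj)) mul_mx_scalar -scalerBl.
have [->|ji] := eqVneq j i; first by rewrite subrr scale0r sub0mx.
by apply/scalemx_sub/(sumsmx_sup j); rewrite ?Pj ?ji.
Qed.

Lemma stablemx_sumsmx_shift U X (a : I -> F) :
  (forall i, (U i *m (X - (a i)%:M) <= \sum_k U k)%MS) -> stablemx (\sum_i U i)%MS X.
Proof.
move=> UX; rewrite sumsmxMr; apply/sumsmx_subP => i _.
have -> : U i *m X = U i *m (X - (a i)%:M) + a i *: U i.
  by rewrite mulmxBr mul_mx_scalar subrK.
by rewrite addmx_sub ?UX // scalemx_sub // (sumsmx_sup i).
Qed.

Section FullSum.

Variable U : I -> 'M[F]_n.+1.
Hypothesis U_full : row_full (\sum_i U i)%MS.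

Lemma full_sumsmx_fix_eq1 X : (forall i, U i *m X = U i) -> X = 1%:M.
Proof.
move=> UX; case/sub_sumsmxP: (submx_full 1%:M U_full) => u u1.
by rewrite -[X]mul1mx u1 mulmx_suml; apply: eq_bigr => i _; rewrite -mulmxA UX.
Qed.

Lemma full_sumsmx_eigen_unitmx K (c : I -> F) :
  (forall i, c i != 0) -> (forall i, (U i <= eigenspace K (c i))%MS) ->
  K \in unitmx.
Proof.
move=> c0 UK; rewrite -row_full_unit -sub1mx.
case/sub_sumsmxP: (submx_full 1%:M U_full) => u ->; apply: summx_sub => i _.
have -> : u i *m U i = ((c i)^-1 *: (u i *m U i)) *m K.
  by rewrite -scalemxAl -mulmxA (eigenspaceP (UK i)) scalemxAr scalerA mulVf ?scale1r.
exact: submxMl.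
Qed.

End FullSum.
End SubspaceSums.

Section Tridiagonal.

Variables (F : fieldType) (n d : nat) (T : 'I_d.+1 -> 'M[F]_n.+1) (X : 'M[F]_n.+1).
Hypothesis sumT : \sum_i T i = 1.
Hypothesis triT :
  forall i j : 'I_d.+1, (j.+1 < i)%N \/ (i.+1 < j)%N -> T i * X * T j = 0.

Lemma mulmx_tridiag_sub j :
  (T j *m X <= \sum_(k : 'I_d.+1 | (j <= k.+1)%N && (k <= j.+1)%N) T k)%MS.
Proof.
rewrite -[T j *m X]mulmx1 -[1%:M]/(1 : 'M_n.+1) -sumT mulmx_sumr.
apply: summx_sub => k _; have [near|far] := boolP ((j <= k.+1)%N && (k <= j.+1)%N).
  by apply: (sumsmx_sup k) => //; apply: submxMl.
rewrite -[_ *m T k]/(T j * X * T k) triT ?sub0mx //.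
by move: far; rewrite negb_and -!ltnNge => /orP[]; [left | right].
Qed.

Lemma mulmx_prefix_sub i :
  ((\sum_(j : 'I_d.+1 | (j <= i)%N) T j)%MS *m X
     <= \sum_(j : 'I_d.+1 | (j <= i.+1)%N) T j)%MS.
Proof.
rewrite sumsmxMr; apply/sumsmx_subP => j ji.
by apply: submx_trans (mulmx_tridiag_sub j) (sumsmx_subset _ _) => k /andP[_ kj]; lia.
Qed.

Lemma mulmx_suffix_sub i :
  ((\sum_(j : 'I_d.+1 | (i <= j)%N) T j)%MS *m X
     <= \sum_(j : 'I_d.+1 | (i <= j.+1)%N) T j)%MS.
Proof.
rewrite sumsmxMr; apply/sumsmx_subP => j ij.
by apply: submx_trans (mulmx_tridiag_sub j) (sumsmx_subset _ _) => k /andP[jk _]; lia.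
Qed.

End Tridiagonal.

Section SplitDecomposition.

Variables (F : fieldType) (n d : nat) (A As : 'M[F]_n.+1).
Variables (E Es : 'I_d.+1 -> 'M[F]_n.+1) (th ths : 'I_d.+1 -> F).
Hypotheses (sumE : \sum_i E i = 1) (sumEs : \sum_i Es i = 1).
Hypothesis triE :
  forall i j : 'I_d.+1, (j.+1 < i)%N \/ (i.+1 < j)%N -> E i * As * E j = 0.
Hypothesis triEs :
  forall i j : 'I_d.+1, (j.+1 < i)%N \/ (i.+1 < j)%N -> Es i * A * Es j = 0.
Hypothesis eigE : forall i, (E i <= eigenspace A (th i))%MS.
Hypothesis eigEs : forall i, (Es i <= eigenspace As (ths i))%MS.

Local Notation U := (split_space E Es).

Lemma split_space_raise i :
  (U i *m (A - (th i)%:M) <= \sum_(k : 'I_d.+1 | k == i.+1 :> nat) U k)%MS.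
Proof.
have Uprefix : (U i *m (A - (th i)%:M) <= \sum_(j : 'I_d.+1 | (j <= i.+1)%N) Es j)%MS.
  have Ui : (U i <= \sum_(j : 'I_d.+1 | (j <= i)%N) Es j)%MS := capmxSl _ _.
  rewrite mulmxBr mul_mx_scalar addmx_sub //.
    exact: submx_trans (submxMr _ Ui) (mulmx_prefix_sub sumEs triEs i).
  rewrite -scaleNr scalemx_sub //; apply: submx_trans Ui (sumsmx_subset _ _) => j.
  exact: leqW.
have Usuffix : (U i *m (A - (th i)%:M) <= \sum_(j : 'I_d.+1 | (i < j)%N) E j)%MS.
  apply: submx_trans (submxMr _ (capmxSr _ _)) _.
  apply: submx_trans (sumsmx_eigenspace_shift _ (fun j _ => eigE j)) _.
  apply: sumsmx_subset => j.
  by case/andP=> ij ji; rewrite ltn_neqAle ij andbT eq_sym.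
have [id | di] := ltnP i d.
  apply: (sumsmx_sup (inord i.+1)); first by rewrite inordK.
  by rewrite sub_capmx inordK ?ltnS // Uprefix Usuffix.
apply: submx_trans Usuffix _; rewrite big_pred0 ?sub0mx // => j.
by apply/negbTE; rewrite -leqNgt (leq_trans (leq_ord j)).
Qed.

Lemma split_space_lower i :
  (U i *m (As - (ths i)%:M) <= \sum_(k : 'I_d.+1 | k.+1 == i :> nat) U k)%MS.
Proof.
have Usuffix : (U i *m (As - (ths i)%:M) <= \sum_(j : 'I_d.+1 | (i <= j.+1)%N) E j)%MS.
  have Ui : (U i <= \sum_(j : 'I_d.+1 | (i <= j)%N) E j)%MS := capmxSr _ _.
  rewrite mulmxBr mul_mx_scalar addmx_sub //.
    exact: submx_trans (submxMr _ Ui) (mulmx_suffix_sub sumE triE i).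
  rewrite -scaleNr scalemx_sub //; apply: submx_trans Ui (sumsmx_subset _ _) => j.
  exact: leqW.
have Uprefix : (U i *m (As - (ths i)%:M) <= \sum_(j : 'I_d.+1 | (j < i)%N) Es j)%MS.
  apply: submx_trans (submxMr _ (capmxSl _ _)) _.
  apply: submx_trans (sumsmx_eigenspace_shift _ (fun j _ => eigEs j)) _.
  apply: sumsmx_subset => j.
  by case/andP=> ji ij; rewrite ltn_neqAle ji andbT.
have [i0 | i_gt0] := posnP i.
  apply: submx_trans Uprefix _; rewrite big_pred0 ?sub0mx // => j.
  by rewrite i0.
have i_le : (i.-1 < d.+1)%N by apply: leq_ltn_trans (leq_pred i) (ltn_ord i).
apply: (sumsmx_sup (inord i.-1)); first by rewrite inordK // prednK.
rewrite sub_capmx inordK //; apply/andP; split.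
  by apply: submx_trans Uprefix (sumsmx_subset _ _) => j; lia.
by apply: submx_trans Usuffix (sumsmx_subset _ _) => j; lia.
Qed.

Lemma last_idem_sub_split_space : (E ord_max <= U ord_max)%MS.
Proof.
rewrite sub_capmx [X in _ && X](sumsmx_sup ord_max) ?leqnn // andbT.
apply: submx_trans (submx_full _ (sum1_sumsmx_full sumEs)) (sumsmx_subset _ _).
by move=> j _; apply: leq_ord.
Qed.

Lemma split_space_sum_full :
  (forall W : 'M[F]_n.+1, stablemx W A -> stablemx W As ->
     (W == (0 : 'M[F]_n.+1))%MS || row_full W) ->
  E ord_max != 0 -> row_full (\sum_i U i)%MS.
Proof.
move=> irr Ed_neq0.
have stA : stablemx (\sum_i U i)%MS A.
  apply: (stablemx_sumsmx_shift (a := th)) => i.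
  exact: submx_trans (split_space_raise i) (sumsmx_subset _ _).
have stAs : stablemx (\sum_i U i)%MS As.
  apply: (stablemx_sumsmx_shift (a := ths)) => i.
  exact: submx_trans (split_space_lower i) (sumsmx_subset _ _).
case/orP: (irr _ stA stAs) => // /andP[W0 _].
have Ed_sub : (E ord_max <= \sum_i U i)%MS.
  exact: submx_trans last_idem_sub_split_space (sumsmx_sup ord_max _ (submx_refl _)).
by move: Ed_neq0; rewrite -submx0 (submx_trans Ed_sub W0).
Qed.

End SplitDecomposition.

Lemma qcommutator_fix (F : fieldType) n m (q a c : F) (X K : 'M[F]_n.+1)
    (W : 'M[F]_(m, n.+1)) :
  q != 0 -> q ^+ 2 != 1 -> a * c = 1 ->
  (W <= eigenspace K c)%MS -> (W *m (X - a%:M) <= eigenspace K (c / q ^+ 2))%MS ->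
  W *m ((q - q^-1)^-1 *: (q *: (X * K) - q^-1 *: (K * X))) = W.
Proof.
move=> q0 q2_neq1 ac /eigenspaceP WK /eigenspaceP.
set R := W *m (X - a%:M) => RK.
have WX : W *m X = a *: W + R by rewrite /R mulmxBr mul_mx_scalar addrC subrK.
have WXK : W *m (X * K) = (a * c) *: W + (c / q ^+ 2) *: R.
  by rewrite -mulmxE mulmxA WX mulmxDl -scalemxAl WK RK scalerA.
have WKX : W *m (K * X) = (c * a) *: W + c *: R.
  by rewrite -mulmxE mulmxA WK -scalemxAl WX scalerDr scalerA.
have q_neq_qV : q - q^-1 != 0.
  by apply: contra q2_neq1; rewrite subr_eq0 expr2 => /eqP {1}->; rewrite mulVf.
have key : q *: (W *m (X * K)) - q^-1 *: (W *m (K * X)) = (q - q^-1) *: W.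
  rewrite WXK WKX (mulrC c a) ac !scalerDr !scalerA opprD addrACA -!scalerBl !mulr1.
  have -> : q * (c / q ^+ 2) - q^-1 * c = 0 by field.
  by rewrite scale0r addr0.
by rewrite -scalemxAr mulmxBr -!scalemxAr key scalerA mulVf // scale1r.
Qed.

Lemma eigenspace_invmx (F : fieldType) n m (K : 'M[F]_n.+1) c (W : 'M[F]_(m, n.+1)) :
  K \in unitmx -> c != 0 ->
  (W <= eigenspace K c)%MS -> (W <= eigenspace (invmx K) c^-1)%MS.
Proof.
move=> Ku c0 /eigenspaceP WK; apply/eigenspaceP.
have WKV : c *: (W *m invmx K) = W by rewrite scalemxAl -WK mulmxK.
by rewrite -{2}WKV scalerA mulVf ?scale1r.
Qed.

Lemma qcommutator_inv_fix (F : fieldType) n m (q c : F) (X K : 'M[F]_n.+1)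
    (W : 'M[F]_(m, n.+1)) :
  q != 0 -> q ^+ 2 != 1 -> K \in unitmx -> c != 0 ->
  (W <= eigenspace K c)%MS -> (W *m (X - c%:M) <= eigenspace K (c * q ^+ 2))%MS ->
  W *m ((q - q^-1)^-1 *: (q *: (X * K^-1) - q^-1 *: (K^-1 * X))) = W.
Proof.
move=> q0 q2_neq1 Ku c0 WK RK.
apply: (qcommutator_fix q0 q2_neq1 (divff c0) (eigenspace_invmx Ku c0 WK)).
rewrite -invfM; exact: eigenspace_invmx Ku (mulf_neq0 c0 (expf_neq0 2 q0)) RK.
Qed.

Lemma expfz_sub_double_succ (F : fieldType) (q : F) (d m : nat) : q != 0 ->
  q ^ (d%:Z - (2 * m.+1)%N%:Z) = q ^ (d%:Z - (2 * m)%N%:Z) / q ^+ 2.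
Proof.
move=> q0; apply: (canRL (mulfK (expf_neq0 2 q0))).
by rewrite -[q ^+ 2]/(q ^ 2%:Z) -expfzDr //; congr (_ ^ _); lia.
Qed.

Theorem lemma7p1 (F : closedFieldType) (n d : nat) (q : F)
  (A As : 'M[F]_n.+1) (E Es : 'I_d.+1 -> 'M[F]_n.+1) (K : 'M[F]_n.+1) :
  q != 0 ->
  (forall k : nat, (0 < k)%N -> q ^+ k != 1) ->
  (1 <= d)%N ->
  tridiagonal_system A E As Es ->
  qSerre q A As ->
  (forall i : 'I_d.+1,
      (E i == eigenspace A (q ^ ((2 * i)%N%:Z - d%:Z)))%MS) ->
  (forall i : 'I_d.+1,
      (Es i == eigenspace As (q ^ (d%:Z - (2 * i)%N%:Z)))%MS) ->
  (forall (i : 'I_d.+1) (v : 'rV[F]_n.+1),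
      (v <= split_space E Es i)%MS -> v *m K = q ^ (d%:Z - (2 * i)%N%:Z) *: v) ->
  (q - q^-1)^-1 *: (q *: (A * K) - q^-1 *: (K * A)) = 1
  /\ (q - q^-1)^-1 *: (q *: (As * K^-1) - q^-1 *: (K^-1 * As)) = 1.
Proof.
move=> q0 q_not_root _ [[_ _ EA EsAs] [tri irr]] _ eigE eigEs Kv.
pose th (m : nat) := q ^ ((2 * m)%N%:Z - d%:Z).
pose c (m : nat) := q ^ (d%:Z - (2 * m)%N%:Z).
have c_neq0 m : c m != 0 by rewrite expfz_neq0.
have cS m : c m.+1 = c m / q ^+ 2 by apply: expfz_sub_double_succ.
have sumE := idem_ordering_sum EA; have sumEs := idem_ordering_sum EsAs.
have triE i j ij : E i * As * E j = 0 := (tri i j ij).1.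
have triEs i j ij : Es i * A * Es j = 0 := (tri i j ij).2.
have eigE' i : (E i <= eigenspace A (th i))%MS by case/andP: (eigE i).
have eigEs' i : (Es i <= eigenspace As (c i))%MS by case/andP: (eigEs i).
have UK (i : 'I_d.+1) : (split_space E Es i <= eigenspace K (c i))%MS.
  by apply/row_subP => r; apply/eigenspaceP/Kv/row_sub.
have Ufull := split_space_sum_full sumE sumEs triE triEs eigE' eigEs' irr
  (idem_ordering_neq0 EA ord_max).
have Ku : K \in unitmx := full_sumsmx_eigen_unitmx Ufull (fun i => c_neq0 i) UK.
have q2_neq1 := q_not_root 2%N isT.
split; apply: (full_sumsmx_fix_eq1 Ufull) => i.
  have thc : th i * c i = 1 by rewrite -expfzDr // addrA subrK subrr expr0z.
  apply: (qcommutator_fix q0 q2_neq1 thc (UK i)).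
  apply: submx_trans (split_space_raise sumEs triEs eigE' i) _.
  by apply/sumsmx_subP => k /eqP ki; rewrite -cS -ki; apply: UK.
apply: (qcommutator_inv_fix q0 q2_neq1 Ku (c_neq0 i) (UK i)).
apply: submx_trans (split_space_lower sumE triE eigEs' i) _.
by apply/sumsmx_subP => k /eqP ki; rewrite -ki cS divfK ?expf_neq0 //; apply: UK.
Qed.
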